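(* Let $\alpha,n\in\mathbb{Q}$ with $n\neq0$. The torsion subgroup of $E_{\alpha,-n^2}(\mathbb{Q})$, where $$E_{\alpha,-n^2}:\ y^2=x^3+\alpha x^2-n^2x,$$ is not isomorphic to $\mathbb{Z}/2\mathbb{Z}\times\mathbb{Z}/6\mathbb{Z}$. *)

From HB Require Import structures.
From mathcomp Require Import all_boot all_order all_algebra.
Set Implicit Arguments. Unset Strict Implicit. Unset Printing Implicit Defensive.
Import Order.TTheory GRing.Theory Num.Theory.
Local Open Scope ring_scope.

Inductive ecpoint : Type := EInf | EAff of rat & rat.

Definition on_curve (a b : rat) (P : ecpoint) : Prop :=
  match P with
  | EInf => True
  | EAff x y => y ^+ 2 = x ^+ 3 + a * x ^+ 2 + b * x
  end.

(* Chord-and-tangent addition (Weierstrass form with a1=a3=a6=0, a2=a, a4=b). *)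
Definition ec_add (a b : rat) (P Q : ecpoint) : ecpoint :=
  match P, Q with
  | EInf, _ => Q
  | _, EInf => P
  | EAff x1 y1, EAff x2 y2 =>
      if x1 == x2 then
        if y1 == - y2 then EInf
        else
          let l := (3 * x1 ^+ 2 + 2 * a * x1 + b) / (2 * y1) in
          let x3 := l ^+ 2 - a - x1 - x2 in
          EAff x3 (- (l * (x3 - x1) + y1))
      else
        let l := (y2 - y1) / (x2 - x1) in
        let x3 := l ^+ 2 - a - x1 - x2 in
        EAff x3 (- (l * (x3 - x1) + y1))
  end.

Fixpoint ec_mul (a b : rat) (k : nat) (P : ecpoint) : ecpoint :=
  match k with
  | O => EInf
  | S k' => ec_add a b P (ec_mul a b k' P)
  end.

Definition torsion_point (a b : rat) (P : ecpoint) : Prop :=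
  on_curve a b P /\ exists k : nat, (0 < k)%N /\ ec_mul a b k P = EInf.

Definition torsion_iso_Z2xZ6 (a b : rat) : Prop :=
  exists f : 'Z_2 * 'Z_6 -> ecpoint,
    [/\ injective f,
        (forall u, torsion_point a b (f u)),
        (forall P, torsion_point a b P -> exists u, f u = P) &
        (forall u v, f ((u.1 + v.1)%R, (u.2 + v.2)%R) = ec_add a b (f u) (f v))].

From mathcomp Require Import all_boot all_order all_algebra.
From mathcomp Require Import zify ring lra.
Set Implicit Arguments. Unset Strict Implicit. Unset Printing Implicit Defensive.
Import Order.TTheory GRing.Theory Num.Theory.

(* Suppose f : Z/2 x Z/6 -> E(Q) is an injective homomorphism.  Its three
   elements of order 2 give three distinct roots of the cubic, so that
   E : y^2 = x (x - r)(x - s) with rs = -n^2, r, s != 0.  The image of (0, 2)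
   is a point P = (x0, y0) of order 3, whose tangent line (slope l) meets E
   only at P.  For each 2-torsion point (c, 0), c in {0, r, s}, the difference
   a_c = y0/(x0 - c) - l between the slope of the chord from (c, 0) to P and l
   satisfies a_c^2 = x0 - c, and a_0 a_r + a_0 a_s + a_r a_s = 0.
   Together with rs = -n^2 this produces a rational point of
   Y^2 = X (X - 1)(X - 4) with X not in {0, 1, 4}.  Such points do not exist:
   clearing denominators, each one yields an integer "square triple" u, e, A, B
   (u^2 - e^2 = A^2, u^2 - 4 e^2 = B^2, e != 0) and conversely, and an infinite
   descent on |u|, closed by a finite search for |u| <= 12, rules these out. *)

(* Coprime naturals whose product is a square are squares: by strong induction
   on a, dividing out the square of a prime factor p of a (p^2 | a since p | z
   and p does not divide b). *)
Lemma coprime_mul_sqr_nat (a b z : nat) :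
  coprime a b -> a * b = z ^ 2 -> exists w, a = w ^ 2.
Proof.
elim: a {-2}a (leqnn a) b z => [|N IH] a aN b z.
  by move: aN; rewrite leqn0 => /eqP -> _ _; exists 0.
have [a_le1|a_gt1] := leqP a 1.
  by case: a a_le1 {aN} => [|[|]] // _; [exists 0|exists 1].
move=> cop eq.
have p_pr := pdiv_prime a_gt1; have p_a := pdiv_dvd a.
set p := pdiv a in p_pr p_a.
have p_gt0 := prime_gt0 p_pr.
have p_z : p %| z.
  have : p %| z ^ 2 by rewrite -eq dvdn_mulr.
  by rewrite Euclid_dvdX // andbT.
have p_b : ~~ (p %| b).
  apply/negP => p_b; have : p %| gcdn a b by rewrite dvdn_gcd p_a p_b.
  by rewrite (eqP cop) dvdn1 => /eqP p1; move: p_pr; rewrite p1.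
have p2_a : p ^ 2 %| a.
  have : p ^ 2 %| a * b by rewrite eq dvdn_exp2r.
  by rewrite Gauss_dvdl // coprimeXl // prime_coprime.
case/dvdnP: p2_a => a' ea; case/dvdnP: p_z => z' ez.
have a'_lt : a' < a.
  have p2_gt1 : 1 < p ^ 2 by have := prime_gt1 p_pr; nia.
  rewrite ea -[X in X < _]muln1 ltn_mul2l p2_gt1 andbT lt0n.
  by apply: contraTneq a_gt1 => a'0; rewrite ea a'0.
have [w ew] : exists w, a' = w ^ 2.
  apply: (IH a' _ b z'); first by rewrite -ltnS; apply: leq_trans aN.
    by move: cop; rewrite ea coprimeMl => /andP[].
  apply/eqP; rewrite -(eqn_pmul2r (_ : 0 < p ^ 2)) ?expn_gt0 ?p_gt0 //.
  by rewrite mulnAC -ea eq ez expnMn.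
by exists (w * p); rewrite ea ew expnMn.
Qed.

Local Open Scope ring_scope.

Lemma coprime_mul_sqr (a b z : int) : coprimez a b -> a * b = z ^+ 2 ->
  exists s w v, (s = 1 \/ s = -1) /\ a = s * w ^+ 2 /\ b = s * v ^+ 2.
Proof.
rewrite coprimezE => cop eq.
have eqn : (`|a| * `|b| = `|z| ^ 2)%N by rewrite -abszM eq abszX.
have [w ew] := coprime_mul_sqr_nat cop eqn.
have [v ev] : exists v, `|b|%N = (v ^ 2)%N.
  by apply: (coprime_mul_sqr_nat (b := `|a|%N) (z := `|z|%N));
    rewrite 1?coprime_sym // mulnC.
have ewz : `|a|%:Z = w%:Z ^+ 2 by rewrite ew expr2 -PoszM mulnn.
have evz : `|b|%:Z = v%:Z ^+ 2 by rewrite ev expr2 -PoszM mulnn.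
have z2 := sqr_ge0 z.
have [ha|ha] := lerP 0 a; have [hb|hb] := lerP 0 b.
- by exists 1, w%:Z, v%:Z; rewrite !mul1r -ewz -evz !gez0_abs //; split; [left|].
- exists (-1), 0, v%:Z; split; [by right | split; last by rewrite -evz ltz0_abs //; ring].
  by have -> : a = 0 by nia; ring.
- exists (-1), w%:Z, 0; split; [by right | split; first by rewrite -ewz ltz0_abs //; ring].
  by have -> : b = 0 by nia; ring.
- exists (-1), w%:Z, v%:Z; split; first by right.
  by rewrite -ewz -evz !ltz0_abs //; split; ring.
Qed.

Lemma coprime_mul_sqr_pos (a b z : int) : coprimez a b -> a * b = z ^+ 2 ->
  0 < a \/ 0 < b -> exists w v, a = w ^+ 2 /\ b = v ^+ 2.
Proof.
move=> cop /(coprime_mul_sqr cop) [s [w [v [[]-> [-> ->]]]]].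
  by exists w, v; rewrite !mul1r.
by have := sqr_ge0 w; have := sqr_ge0 v; lia.
Qed.

Lemma primez_dvdM (p : nat) (a b : int) :
  prime p -> (p %| a * b)%Z = (p %| a)%Z || (p %| b)%Z.
Proof. by move=> p_pr; rewrite !dvdzE abszM /= Euclid_dvdM. Qed.

Lemma primez_dvd_constM (p c : nat) (a : int) :
  prime p -> (p %| c%:Z * a)%Z -> (p %| c)%N \/ (p %| a)%Z.
Proof. by move=> p_pr; rewrite primez_dvdM // => /orP[]; [left|right]. Qed.

Lemma prime_dvd4 (p : nat) : prime p -> (p %| 4)%N -> p = 2%N.
Proof.
by move=> p_pr; rewrite (_ : 4 = 2 ^ 2)%N // Euclid_dvdX // dvdn_prime2 // => /andP[/eqP].
Qed.

Lemma primez_dvd_sqr (p : nat) (a : int) : prime p -> (p %| a ^+ 2)%Z -> (p %| a)%Z.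
Proof. by move=> p_pr; rewrite expr2 primez_dvdM // orbb. Qed.

Lemma primez_sqr_cancel (p : nat) (x v : int) :
  prime p -> p%:Z ^+ 2 * x = v ^+ 2 -> exists w, x = w ^+ 2.
Proof.
move=> p_pr hx.
have /dvdzP [w vE] : (p %| v)%Z.
  by apply: (primez_dvd_sqr p_pr); rewrite -hx; apply/dvdzP; exists (p%:Z * x); ring.
have p2_neq0 : p%:Z ^+ 2 != 0 by rewrite expf_neq0 // eqz_nat -lt0n prime_gt0.
by exists w; apply: (mulfI p2_neq0); rewrite hx vE; ring.
Qed.

Lemma coprimez_prime_dvd (p : nat) (a b : int) :
  coprimez a b -> prime p -> (p %| a)%Z -> (p %| b)%Z -> False.
Proof.
move/eqP=> [] g1 p_pr; rewrite !dvdzE /= => pa pb.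
have : (p %| gcdn `|a| `|b|)%N by rewrite dvdn_gcd pa pb.
by rewrite g1 dvdn1 => /eqP p1; move: p_pr; rewrite p1.
Qed.

Lemma coprimez_of_primes (a b : int) :
  (forall p : nat, prime p -> (p %| a)%Z -> (p %| b)%Z -> False) -> coprimez a b.
Proof.
move=> nop; rewrite coprimezE /coprime; set g := gcdn _ _.
have [g0|g_gt1|//] := ltngtP g 1.
  move: g0; rewrite ltnS leqNgt gcdn_gt0 negb_or -!eqn0Ngt !absz_eq0.
  move=> /andP[/eqP a0 /eqP b0].
  by case: (nop 2%N) => //; rewrite ?a0 ?b0 dvdz0.
case: (nop (pdiv g)); first exact: pdiv_prime.
  by rewrite dvdzE /=; apply: dvdn_trans (pdiv_dvd g) (dvdn_gcdl _ _).
by rewrite dvdzE /=; apply: dvdn_trans (pdiv_dvd g) (dvdn_gcdr _ _).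
Qed.

Lemma dvdz_lincomb (d a b x y c : int) :
  (d %| a)%Z -> (d %| b)%Z -> c = x * a + y * b -> (d %| c)%Z.
Proof. by move=> da db ->; rewrite rpredD // dvdz_mull. Qed.

Lemma int_parity (u : int) : exists i, u = 2 * i \/ u = 2 * i + 1.
Proof.
exists (u %/ 2)%Z; have := divz_eq u 2.
have := modz_ge0 u (isT : (2 : int) != 0); have := ltz_pmod u (isT : (0 : int) < 2).
lia.
Qed.

Lemma odd_sqr_mod8 (u : int) : ~~ (2 %| u)%Z -> exists a, u ^+ 2 = 8 * a + 1.
Proof.
move=> u_odd; have [i [ui|ui]] := int_parity u.
  by move: u_odd; rewrite ui dvdz_mulr.
have [j [ij|ij]] := int_parity i.
  by exists (j * (2 * j + 1)); rewrite ui ij; ring.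
by exists ((2 * j + 1) * (j + 1)); rewrite ui ij; ring.
Qed.

Lemma sqr_mod8 (v : int) :
  exists q, v ^+ 2 = 8 * q \/ v ^+ 2 = 8 * q + 1 \/ v ^+ 2 = 8 * q + 4.
Proof.
have [i [vi|vi]] := int_parity v; have [j [ij|ij]] := int_parity i.
- by exists (2 * j ^+ 2); left; rewrite vi ij; ring.
- by exists (2 * j ^+ 2 + 2 * j); right; right; rewrite vi ij; ring.
- by exists (j * (2 * j + 1)); right; left; rewrite vi ij; ring.
- by exists ((2 * j + 1) * (j + 1)); right; left; rewrite vi ij; ring.
Qed.

(* For odd u and e, (2u^2 - e^2)(u^2 - 2e^2) is 7 mod 8, hence not a square. *)
Lemma odd_odd_not_sqr (u e v : int) : ~~ (2 %| u)%Z -> ~~ (2 %| e)%Z ->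
  (2 * u ^+ 2 - e ^+ 2) * (u ^+ 2 - 2 * e ^+ 2) <> v ^+ 2.
Proof.
move=> /odd_sqr_mod8 [a ->] /odd_sqr_mod8 [b ->]; have [q hq] := sqr_mod8 v.
have -> : (2 * (8 * a + 1) - (8 * b + 1)) * (8 * a + 1 - 2 * (8 * b + 1)) =
  8 * (16 * a ^+ 2 - 40 * a * b + 16 * b ^+ 2 - a - b) - 1 by ring.
move: (16 * a ^+ 2 - 40 * a * b + 16 * b ^+ 2 - a - b) => t; lia.
Qed.

(* u^2, u^2 - e^2 and u^2 - 4e^2 are all squares, with e != 0.  Such integer
   solutions correspond to the rational points of Y^2 = X(X - 1)(X - 4) with
   X not in {0, 1, 4}. *)
Definition square_triple (u e A B : int) : Prop :=
  e != 0 /\ u ^+ 2 - e ^+ 2 = A ^+ 2 /\ u ^+ 2 - 4 * e ^+ 2 = B ^+ 2.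

(* Rational point X = m/k with k = e^2 (and m, k coprime), in the three cases
   m odd, m = 2 mod 4 and 4 | m: m(m-k)(m-4k) = v^2 forces m and
   (m-k)(m-4k) to be squares, the middle case being impossible mod 8. *)
Lemma int_point_odd (m k v : int) : 0 < k -> coprimez m k -> m != 0 ->
  ~~ (2 %| m)%Z -> m * (m - k) * (m - 4 * k) = v ^+ 2 ->
  exists U N, m = U ^+ 2 /\ (m - k) * (m - 4 * k) = N ^+ 2.
Proof.
move=> k_gt0 cop m0 m_odd; rewrite -mulrA => hv; apply: coprime_mul_sqr_pos hv _.
  apply: coprimez_of_primes => p p_pr pm; rewrite primez_dvdM // => /orP[] pmk.
    apply: (coprimez_prime_dvd cop p_pr pm).
    by apply: (dvdz_lincomb pm pmk (x := 1) (y := -1)); ring.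
  have : (p %| 4%N%:Z * k)%Z by apply: (dvdz_lincomb pm pmk (x := 1) (y := -1)); ring.
  case/(primez_dvd_constM p_pr) => [/(prime_dvd4 p_pr) p2|pk].
    by move: pm; rewrite p2 => /(negP m_odd).
  exact: coprimez_prime_dvd cop p_pr pm pk.
by have [m_gt0|m_le0] := ltrP 0 m; [left | right; nia].
Qed.

Lemma int_point_two_mod4 (m1 k e v : int) : 0 < k -> coprimez (2 * m1) k ->
  k = e ^+ 2 -> m1 != 0 -> ~~ (2 %| m1)%Z ->
  2 * m1 * (2 * m1 - k) * (2 * m1 - 4 * k) <> v ^+ 2.
Proof.
move=> k_gt0 cop ke m0 m_odd hv.
have [w hw] : exists w, m1 * ((2 * m1 - k) * (m1 - 2 * k)) = w ^+ 2.
  by apply: (@primez_sqr_cancel 2 _ v) => //; rewrite -hv; ring.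
have k_odd : ~~ (2 %| k)%Z.
  by apply/negP => k2; apply: (coprimez_prime_dvd cop (p := 2)) => //; rewrite dvdz_mulr.
have e_odd : ~~ (2 %| e)%Z by apply: contra k_odd; rewrite ke expr2 => /dvdz_mulr->.
have cop' : coprimez m1 ((2 * m1 - k) * (m1 - 2 * k)).
  apply: coprimez_of_primes => p p_pr pm; rewrite primez_dvdM // => /orP[] pmk.
    apply: (coprimez_prime_dvd cop p_pr); first by rewrite dvdz_mull.
    by apply: (dvdz_lincomb pm pmk (x := 2) (y := -1)); ring.
  have : (p %| 2%N%:Z * k)%Z by apply: (dvdz_lincomb pm pmk (x := 1) (y := -1)); ring.
  case/(primez_dvd_constM p_pr) => [|pk].
    by rewrite dvdn_prime2 // => /eqP p2; move: pm; rewrite p2 => /(negP m_odd).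
  by apply: (coprimez_prime_dvd cop p_pr _ pk); rewrite dvdz_mull.
have [u [w' [mu hw']]] : exists u w', m1 = u ^+ 2 /\
    (2 * m1 - k) * (m1 - 2 * k) = w' ^+ 2.
  apply: coprime_mul_sqr_pos cop' hw _.
  by have [m_gt0|m_le0] := ltrP 0 m1; [left | right; nia].
have u_odd : ~~ (2 %| u)%Z by apply: contra m_odd; rewrite mu expr2 => /dvdz_mulr->.
by apply: (odd_odd_not_sqr u_odd e_odd (v := w')); rewrite -hw' mu ke.
Qed.

Lemma int_point_four_dvd (m2 k v : int) : 0 < k -> coprimez (4 * m2) k -> m2 != 0 ->
  4 * m2 * (4 * m2 - k) * (4 * m2 - 4 * k) = v ^+ 2 ->
  exists U N, 4 * m2 = U ^+ 2 /\ (4 * m2 - k) * (4 * m2 - 4 * k) = N ^+ 2.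
Proof.
move=> k_gt0 cop m0 hv.
have [w1 hw1] : exists w, 4 * (m2 * ((4 * m2 - k) * (m2 - k))) = w ^+ 2.
  by apply: (@primez_sqr_cancel 2 _ v) => //; rewrite -hv; ring.
have [w hw] : exists w, m2 * ((4 * m2 - k) * (m2 - k)) = w ^+ 2.
  by apply: (@primez_sqr_cancel 2 _ w1) => //; rewrite -hw1; ring.
have cop' : coprimez m2 ((4 * m2 - k) * (m2 - k)).
  apply: coprimez_of_primes => p p_pr pm; rewrite primez_dvdM // => /orP[] pmk.
    apply: (coprimez_prime_dvd cop p_pr); first by rewrite dvdz_mull.
    by apply: (dvdz_lincomb pm pmk (x := 4) (y := -1)); ring.
  apply: (coprimez_prime_dvd cop p_pr); first by rewrite dvdz_mull.
  by apply: (dvdz_lincomb pm pmk (x := 1) (y := -1)); ring.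
have [u [w' [mu hw']]] : exists u w', m2 = u ^+ 2 /\ (4 * m2 - k) * (m2 - k) = w' ^+ 2.
  apply: coprime_mul_sqr_pos cop' hw _.
  by have [m_gt0|m_le0] := ltrP 0 m2; [left | right; nia].
by exists (2 * u), (2 * w'); rewrite !exprMn -mu -hw'; split; ring.
Qed.

Lemma int_point_factor (m k e v : int) : 0 < k -> coprimez m k -> k = e ^+ 2 ->
  m != 0 -> m * (m - k) * (m - 4 * k) = v ^+ 2 ->
  exists U N, m = U ^+ 2 /\ (m - k) * (m - 4 * k) = N ^+ 2.
Proof.
move=> k_gt0 cop ke m0 hv.
have [m_even|m_odd] := boolP (2 %| m)%Z; last exact: (int_point_odd k_gt0 cop m0 m_odd hv).
case/dvdzP: m_even => m1 mE; rewrite mulrC in mE; subst m.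
have m1_0 : m1 != 0 by move: m0; rewrite mulf_eq0 negb_or => /andP[].
have [m1_even|m1_odd] := boolP (2 %| m1)%Z; last first.
  by case: (int_point_two_mod4 k_gt0 cop ke m1_0 m1_odd hv).
case/dvdzP: m1_even => m2 m1E; rewrite mulrC in m1E; subst m1.
have m2_0 : m2 != 0 by move: m1_0; rewrite mulf_eq0 negb_or => /andP[].
have m4 : 2 * (2 * m2) = 4 * m2 by ring.
by rewrite m4 in cop hv *; apply: int_point_four_dvd hv.
Qed.

(* From m = U^2, k = e^2 and (m-k)(m-4k) = N^2 we extract a square triple of
   size u^2 <= 4(|m| + k), distinguishing whether m - k and m - 4k are coprime
   or both divisible by 3 (their gcd divides 3k). *)
Lemma square_triple_coprime_factors (m k U e N : int) : 0 < k -> m = U ^+ 2 ->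
  k = e ^+ 2 -> m != 0 -> coprimez (m - k) (m - 4 * k) ->
  (m - k) * (m - 4 * k) = N ^+ 2 ->
  exists u e' A B, square_triple u e' A B /\ u ^+ 2 <= 4 * (`|m| + k).
Proof.
move=> k_gt0 mU ke m0 cop hN; have m_le := ler_norm m.
have [s [A [B [[]-> [hA hB]]]]] := coprime_mul_sqr cop hN.
  exists U, e, A, B; split; last by rewrite -mU; clear -m_le k_gt0; lia.
  split; first by apply: contraTneq k_gt0 => e0; rewrite ke e0 expr0n.
  by rewrite -mU -ke hA hB !mul1r.
exists (2 * e), U, B, (2 * A); split.
  split; first by apply: contraNneq m0 => U0; rewrite mU U0 expr0n.
  by rewrite !exprMn -mU -ke; split; clear -hA hB; lia.
by rewrite exprMn -ke; clear -m_le k_gt0; lia.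
Qed.

Lemma square_triple_three_dvd (m k U e N : int) : 0 < k -> m = U ^+ 2 ->
  k = e ^+ 2 -> coprimez m k -> (3 %| m - k)%Z ->
  (m - k) * (m - 4 * k) = N ^+ 2 -> m != k -> m != 4 * k ->
  exists u e' A B, square_triple u e' A B /\ u ^+ 2 <= 4 * (`|m| + k).
Proof.
move=> k_gt0 mU ke cop /dvdzP [P hP] hN mk m4k; have m_le := ler_norm m.
have [N1 hN1] : exists N1, P * (P - k) = N1 ^+ 2.
  apply: (@primez_sqr_cancel 3 _ N) => //; rewrite -hN.
  have -> : m - 4 * k = (P - k) * 3 by clear -hP; lia.
  by rewrite hP; ring.
have cop' : coprimez P (P - k).
  apply: coprimez_of_primes => p p_pr pP pPk.
  have pk : (p %| k)%Z by apply: (dvdz_lincomb pP pPk (x := 1) (y := -1)); ring.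
  apply: (coprimez_prime_dvd cop p_pr _ pk).
  by apply: (dvdz_lincomb pP pk (x := 3) (y := 1)); rewrite -(subrK k m) hP; ring.
have [s [A [B [hs [hA hB]]]]] := coprime_mul_sqr cop' hN1.
have A2 := sqr_ge0 A; have B2 := sqr_ge0 B.
case: hs hA hB => -> hA hB; rewrite ?mul1r in hA hB.
  exists (2 * A), B, U, (2 * e); split.
    split; first by apply: contraNneq m4k => B0; rewrite B0 expr0n /= in hB;
      clear -hP hB; lia.
    by rewrite !exprMn -mU -ke -hA -hB; split; clear -hP; lia.
  by rewrite exprMn -hA; clear -hP hA A2 m_le k_gt0; lia.
exists B, A, e, U; split.
  split; first by apply: contraNneq mk => A0; rewrite A0 expr0n /= in hA;
    clear -hP hA; lia.
  by rewrite -mU -ke; split; clear -hP hA hB; lia.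
by clear -hP hA hB A2 m_le k_gt0; lia.
Qed.

(* First k is a
   square since it is coprime with the other factor. *)
Lemma square_triple_of_int_point (m k Z : int) : 0 < k -> coprimez m k ->
  m * (m - k) * (m - 4 * k) * k = Z ^+ 2 -> m != 0 -> m != k -> m != 4 * k ->
  exists u e A B, square_triple u e A B /\ u ^+ 2 <= 4 * (`|m| + k).
Proof.
move=> k_gt0 cop hZ m0 mk m4k.
have cop_k : coprimez k (m * (m - k) * (m - 4 * k)).
  apply: coprimez_of_primes => p p_pr pk; rewrite !primez_dvdM // => /orP[/orP[]|] pm.
  - exact: coprimez_prime_dvd cop p_pr pm pk.
  - apply: (coprimez_prime_dvd cop p_pr _ pk).
    by apply: (dvdz_lincomb pm pk (x := 1) (y := 1)); ring.
  - apply: (coprimez_prime_dvd cop p_pr _ pk).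
    by apply: (dvdz_lincomb pm pk (x := 1) (y := 4)); ring.
have [e [v [ke hv]]] : exists e v, k = e ^+ 2 /\ m * (m - k) * (m - 4 * k) = v ^+ 2.
  exact: coprime_mul_sqr_pos cop_k (etrans (mulrC _ _) hZ) (or_introl k_gt0).
have [U [N [mU hN]]] := int_point_factor k_gt0 cop ke m0 hv.
have [m_k3|m_k3] := boolP (3 %| m - k)%Z.
  exact: square_triple_three_dvd k_gt0 mU ke cop m_k3 hN mk m4k.
apply: (square_triple_coprime_factors k_gt0 mU ke m0 _ hN).
apply: coprimez_of_primes => p p_pr p1 p2.
have : (p %| 3%N%:Z * k)%Z by apply: (dvdz_lincomb p1 p2 (x := 1) (y := -1)); ring.
case/(primez_dvd_constM p_pr) => [|pk].
  by rewrite dvdn_prime2 // => /eqP p3; move: p1; rewrite p3 => /(negP m_k3).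
apply: (coprimez_prime_dvd cop p_pr _ pk).
by apply: (dvdz_lincomb p1 pk (x := 1) (y := 1)); ring.
Qed.

Lemma rat_sqr_int (x : rat) (n : int) : x ^+ 2 = n%:~R -> exists z : int, x = z%:~R.
Proof.
move=> hx; exists (numq x).
have hd : numq x ^+ 2 = n * denq x ^+ 2.
  by apply: (@intr_inj rat); rewrite rmorphXn intrM rmorphXn /= numqE exprMn hx.
have d1 : denq x = 1.
  have : (`|denq x| %| `|numq x| ^ 2)%N.
    by rewrite -abszX hd abszM dvdn_mull // abszX dvdn_exp.
  have cdn : coprime `|denq x| `|numq x| by rewrite coprime_sym coprime_num_den.
  move=> /gcdn_idPl; rewrite (eqP (coprimeXr 2 cdn)) => h.
  by apply/eqP; rewrite -absz_denq -h.
by rewrite -[x in LHS]divq_num_den d1 divr1.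
Qed.

Lemma square_triple_of_rat_point (X Y : rat) : Y ^+ 2 = X * (X - 1) * (X - 4) ->
  X != 0 -> X != 1 -> X != 4 ->
  exists u e A B, square_triple u e A B /\ u ^+ 2 <= 4 * (`|numq X| + denq X).
Proof.
move=> hY X0 X1 X4; set m := numq X; set k := denq X.
have k_gt0 : 0 < k := denq_gt0 X.
have kq0 : (k%:~R : rat) != 0 by rewrite intr_eq0 denq_neq0.
have hm : (m%:~R : rat) = X * k%:~R := numqE X.
have hZ : (Y * k%:~R ^+ 2) ^+ 2 = (m * (m - k) * (m - 4 * k) * k)%:~R.
  rewrite !intrM !intrD !intrN intrM hm exprMn hY.
  by rewrite [(4%:~R : rat)]/(intmul 1 4) /=; ring.
have [z hz] := rat_sqr_int hZ.
apply: (square_triple_of_int_point k_gt0 (coprime_num_den X) (Z := z)).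
- by apply: (@intr_inj rat); rewrite -hZ hz rmorphXn.
- by rewrite /m numq_eq0.
- apply/eqP => mk; move: X1; rewrite -(divq_num_den X) mk divff //.
- apply/eqP => mk; move: X4; rewrite -(divq_num_den X) mk intrM mulfK //.
Qed.

Lemma square_triple_bounds (u e A B : int) : square_triple u e A B ->
  0 <= u -> 0 <= e -> 0 <= A -> 0 <= B -> [/\ e <= u, A < u & B < u].
Proof.
case=> e0 [hA hB] u0 e_ge0 A0 B0.
have e2 : 0 < e ^+ 2 by rewrite exprn_gt0 // lt_def e0 e_ge0.
have sqr_lt x : 0 <= x -> (x < u) = (x ^+ 2 < u ^+ 2) by move=> x0; rewrite ltr_pXn2r.
have A2 := sqr_ge0 A; have B2 := sqr_ge0 B.
split; last by rewrite sqr_lt //; clear -hB e2; lia.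
  by rewrite -(ler_pXn2r (isT : (0 < 2)%N)) ?nnegrE //; clear -hA A2; lia.
by rewrite sqr_lt //; clear -hA e2; lia.
Qed.

Lemma fraction_height (p q : int) : 0 < q ->
  `|numq ((p%:~R : rat) / q%:~R)| <= `|p| /\ denq ((p%:~R : rat) / q%:~R) <= q.
Proof.
move=> q_gt0; set x := (p%:~R : rat) / q%:~R.
have qn0 : (q%:~R : rat) != 0 by rewrite intr_eq0 gt_eqF.
have hx : numq x * q = p * denq x.
  by apply: (@intr_inj rat); rewrite !intrM numqE /x mulrAC divfK.
have hn : (`|numq x| * `|q| = `|p| * `|denq x|)%N by rewrite -!abszM hx.
have dq : (`|denq x| %| `|q|)%N.
  have : (`|denq x| %| `|numq x| * `|q|)%N by rewrite hn dvdn_mull.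
  by rewrite Gauss_dvdr // coprime_sym coprime_num_den.
have dle : (`|denq x| <= `|q|)%N by rewrite dvdn_leq // absz_gt0 gt_eqF.
split; last by rewrite -(gez0_abs (ltW q_gt0)) -absz_denq lez_nat.
have : (`|numq x| * `|q| <= `|p| * `|q|)%N by rewrite hn leq_mul2l dle orbT.
by rewrite leq_pmul2r ?absz_gt0 ?gt_eqF.
Qed.

(* Conversely, a square triple with 0 <= A < u and 0 <= B gives the point
   X = (u + A)(u + B)/e^2 = (u + B)/(u - A) of Y^2 = X(X - 1)(X - 4), with
   Y = (u + A)(u + B)(A + B)/e^3. *)
Lemma rat_point_of_square_triple (u e A B : int) : square_triple u e A B ->
  0 <= A -> 0 <= B -> A < u ->
  let X := (u + B)%:~R / (u - A)%:~R in
  exists Y : rat, Y ^+ 2 = X * (X - 1) * (X - 4) /\ [/\ X != 0, X != 1 & X != 4].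
Proof.
case=> e0 [hA hB] A0 B0 Au X.
set ua : rat := u%:~R; set ea : rat := e%:~R; set Aa : rat := A%:~R; set Ba : rat := B%:~R.
have hA' : ua ^+ 2 - ea ^+ 2 = Aa ^+ 2 by rewrite /ua /ea /Aa -!rmorphXn -intrB hA.
have hB' : ua ^+ 2 - 4 * ea ^+ 2 = Ba ^+ 2.
  by rewrite /ua /ea /Ba -!rmorphXn -[4 : rat]/((4 : int)%:~R) -intrM -intrB hB.
have ea0 : ea != 0 by rewrite intr_eq0.
have e2n : ea ^+ 2 != 0 by rewrite expf_neq0.
have uAp : ua + Aa != 0 by rewrite -intrD intr_eq0; apply/eqP; clear -Au A0; lia.
have uAm : ua - Aa != 0 by rewrite -intrB intr_eq0; apply/eqP; clear -Au; lia.
have uBp : ua + Ba != 0 by rewrite -intrD intr_eq0; apply/eqP; clear -Au A0 B0; lia.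
have ABp : Aa + Ba != 0.
  rewrite -intrD intr_eq0; apply/eqP => AB.
  have [A00 B00] : A = 0 /\ B = 0 by clear -AB A0 B0; lia.
  have /eqP : e ^+ 2 = 0 by move: hA hB; rewrite A00 B00; clear; lia.
  by rewrite expf_eq0 /= (negbTE e0).
have -> : X = (ua + Aa) * (ua + Ba) / ea ^+ 2.
  rewrite /X intrD intrB -/ua -/Aa -/Ba.
  have -> : ea ^+ 2 = (ua - Aa) * (ua + Aa).
    by transitivity (ua ^+ 2 - Aa ^+ 2); [rewrite -hA'; ring | ring].
  by field; rewrite uAm uAp.
set X' := (ua + Aa) * (ua + Ba) / ea ^+ 2.
have X'1 : X' - 1 = (ua + Aa) * (Aa + Ba) / ea ^+ 2.
  rewrite /X' -{1}(divff e2n) -mulrBl; congr (_ / _).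
  have -> : ea ^+ 2 = ua ^+ 2 - Aa ^+ 2 by rewrite -hA'; ring.
  by ring.
have X'4 : X' - 4 = (ua + Ba) * (Aa + Ba) / ea ^+ 2.
  rewrite /X' -[4 in LHS](mulfK e2n) -mulrBl; congr (_ / _).
  have -> : 4 * ea ^+ 2 = ua ^+ 2 - Ba ^+ 2 by rewrite -hB'; ring.
  by ring.
exists ((ua + Aa) * (ua + Ba) * (Aa + Ba) / ea ^+ 3); split.
  by rewrite X'1 X'4 /X'; field.
split; first by rewrite /X' !mulf_neq0 // invr_neq0.
  by rewrite -subr_eq0 X'1 !mulf_neq0 // invr_neq0.
by rewrite -subr_eq0 X'4 !mulf_neq0 // invr_neq0.
Qed.

(* One descent step: a square triple with u > 12 yields a strictly smaller one,
   through the associated rational point, whose height is at most 2u. *)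
Lemma square_triple_descent (u e A B : int) : square_triple u e A B ->
  0 <= e -> 0 <= A -> 0 <= B -> 12 < u ->
  exists u' e' A' B', square_triple u' e' A' B' /\ `|u'| < u.
Proof.
move=> sq e0 A0 B0 u12.
have u0 : 0 <= u by clear -u12; lia.
have [_ Au Bu] := square_triple_bounds sq u0 e0 A0 B0.
have [Y [hY [X0 X1 X4]]] := rat_point_of_square_triple sq A0 B0 Au.
have uA : 0 < u - A by clear -Au; lia.
have [num_le den_le] := fraction_height (u + B) uA.
have [u' [e' [A' [B' [sq' hu']]]]] := square_triple_of_rat_point hY X0 X1 X4.
exists u', e', A', B'; split => //.
rewrite -(ltr_pXn2r (isT : (0 < 2)%N)) ?nnegrE // real_normK ?num_real //.
have uB : 0 <= u + B by clear -u0 B0; lia.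
apply: le_lt_trans hu' _; rewrite (ger0_norm uB) in num_le.
have h12 : 12 * u < u ^+ 2 by rewrite expr2; clear -u12; nia.
apply: le_lt_trans (ler_wpM2l _ (lerD num_le den_le)) _ => //.
by clear -h12 Bu A0; lia.
Qed.

Definition small_square_triples_absent : bool :=
  all (fun u => all (fun e => all (fun a => all (fun b =>
    ~~ [&& (0 < e)%N, u * u == e * e + a * a & u * u == 4 * (e * e) + b * b])
  (iota 0 13)) (iota 0 13)) (iota 0 13)) (iota 0 13).

Lemma small_square_triples_absentP : small_square_triples_absent.
Proof. by vm_compute. Qed.

Lemma no_small_square_triple (u e A B : int) : square_triple u e A B ->
  0 <= u <= 12 -> 0 <= e -> 0 <= A -> 0 <= B -> False.
Proof.
move=> sq /andP[u0 u12] e0 A0 B0.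
have [eu Au Bu] := square_triple_bounds sq u0 e0 A0 B0.
case: sq => e_neq0 [hA hB].
case: u u0 u12 hA hB eu Au Bu => // un _ u12; case: e e_neq0 e0 => // en en0 _.
case: A A0 => // an _; case: B B0 => // bn _; rewrite !expr2 => hA hB eu Au Bu.
have small (x : nat) : (x <= un)%N -> x \in iota 0 13.
  by rewrite mem_iota add0n; clear -u12; lia.
move/allP: small_square_triples_absentP => /(_ un (small _ (leqnn _))).
move=> /allP/(_ en (small _ eu))/allP/(_ an (small _ (ltnW Au))).
move=> /allP/(_ bn (small _ (ltnW Bu)))/negP; apply; apply/and3P.
by split; clear -en0 hA hB; lia.
Qed.

Lemma square_triple_norm (u e A B : int) : square_triple u e A B ->
  square_triple `|u| `|e| `|A| `|B|.
Proof. by case=> e0 [hA hB]; rewrite /square_triple !real_normK ?num_real ?normr_eq0. Qed.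

Lemma no_square_triple (u e A B : int) : ~ square_triple u e A B.
Proof.
move: {2}`|u|%N (erefl `|u|%N) => n.
elim/ltn_ind: n u e A B => n IH u e A B un /square_triple_norm sq.
have [small|big] := lerP `|u| 12.
  by apply: no_small_square_triple sq _ _ _ _; rewrite ?normr_ge0.
have [u' [e' [A' [B' [sq' lt]]]]] :=
  square_triple_descent sq (normr_ge0 e) (normr_ge0 A) (normr_ge0 B) big.
by apply: (IH `|u'|%N _ u' e' A' B' erefl sq'); rewrite -un -ltz_nat !abszE.
Qed.

Lemma rat_points_0_1_4 (X Y : rat) :
  Y ^+ 2 = X * (X - 1) * (X - 4) -> [|| X == 0, X == 1 | X == 4].
Proof.
move=> hY; apply/negPn/negP; rewrite !negb_or => /and3P[X0 X1 X4].
have [u [e [A [B [sq _]]]]] := square_triple_of_rat_point hY X0 X1 X4.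
exact: no_square_triple sq.
Qed.

(* A point (x0, y0) of order 3 on y^2 = x(x - r)(x - s): l is the slope of the
   tangent at the point, and 2P = -P says that this tangent meets the curve
   only at P, i.e. l^2 = 3 x0 - (r + s). *)
Section OrderThreePoint.
Variables (x0 y0 l r s : rat).
Hypotheses (y0_neq0 : y0 != 0) (on_E : y0 ^+ 2 = x0 * (x0 - r) * (x0 - s))
  (slope : 2 * y0 * l = 3 * x0 ^+ 2 - 2 * (r + s) * x0 + r * s)
  (flex : l ^+ 2 = 3 * x0 - (r + s)).

(* Chord slope from (c, 0) to P minus the tangent slope; for c in {0, r, s}
   it is a square root of x0 - c. *)
Let a (c : rat) := (y0 - l * (x0 - c)) / (x0 - c).

Let nz : x0 * (x0 - r) * (x0 - s) != 0.
Proof. by rewrite -on_E sqrf_eq0. Qed.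
Let x0_neq0 : x0 != 0. Proof. by apply: contraNneq nz => ->; rewrite !mul0r. Qed.
Let x0r_neq0 : x0 - r != 0. Proof. by apply: contraNneq nz => ->; rewrite mulr0 mul0r. Qed.
Let x0s_neq0 : x0 - s != 0. Proof. by apply: contraNneq nz => ->; rewrite mulr0. Qed.

Lemma tangent_shift_sqr (c : rat) : c \in [:: 0; r; s] -> a c ^+ 2 = x0 - c.
Proof.
move=> c_in; rewrite /a expr_div_n.
have c0 : x0 - c != 0 by move: c_in; rewrite !inE => /or3P[]/eqP->; rewrite ?subr0.
have -> : (y0 - l * (x0 - c)) ^+ 2 = (x0 - c) ^+ 3.
  have -> : (y0 - l * (x0 - c)) ^+ 2 =
    y0 ^+ 2 - (x0 - c) * (2 * y0 * l) + (x0 - c) ^+ 2 * l ^+ 2 by ring.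
  by rewrite on_E slope flex; move: c_in; rewrite !inE => /or3P[]/eqP->; ring.
by field.
Qed.

Lemma tangent_shift_sum : a 0 + a r + a s = - l.
Proof.
have sum_inv : y0 / x0 + y0 / (x0 - r) + y0 / (x0 - s) = 2 * l.
  apply: (mulfI y0_neq0).
  transitivity (y0 ^+ 2 * ((x0 - r) * (x0 - s) + x0 * (x0 - s) + x0 * (x0 - r)) /
      (x0 * (x0 - r) * (x0 - s))); first by field; rewrite x0_neq0 x0r_neq0 x0s_neq0.
  rewrite on_E mulrAC divff // mul1r; transitivity (2 * y0 * l); last by ring.
  by rewrite slope; ring.
rewrite /a subr0.
have -> : (y0 - l * x0) / x0 + (y0 - l * (x0 - r)) / (x0 - r) +
    (y0 - l * (x0 - s)) / (x0 - s) =
  (y0 / x0 + y0 / (x0 - r) + y0 / (x0 - s)) - 3 * l.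
  by field; rewrite x0_neq0 x0r_neq0 x0s_neq0.
by rewrite sum_inv; ring.
Qed.

Lemma order_three_point_shifts : exists a0 ar as_ : rat,
  [/\ a0 != 0, r = a0 ^+ 2 - ar ^+ 2, s = a0 ^+ 2 - as_ ^+ 2 &
      a0 * ar + a0 * as_ + ar * as_ = 0].
Proof.
have a0E : a 0 ^+ 2 = x0 by rewrite tangent_shift_sqr ?inE ?eqxx // subr0.
have arE : a r ^+ 2 = x0 - r by rewrite tangent_shift_sqr ?inE ?eqxx ?orbT.
have asE : a s ^+ 2 = x0 - s by rewrite tangent_shift_sqr ?inE ?eqxx ?orbT.
exists (a 0), (a r), (a s); split.
- by apply: contraNneq x0_neq0 => a0; rewrite -a0E a0 expr0n.
- by rewrite a0E arE; ring.
- by rewrite a0E asE; ring.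
have two_neq0 : (2 : rat) != 0 by [].
apply: (mulfI two_neq0); rewrite mulr0.
transitivity ((a 0 + a r + a s) ^+ 2 - (a 0 ^+ 2 + a r ^+ 2 + a s ^+ 2)); first by ring.
by rewrite tangent_shift_sum a0E arE asE sqrrN flex; ring.
Qed.

End OrderThreePoint.

(* If r = a0^2 - ar^2 and s = a0^2 - as^2 with a0 ar + a0 as + ar as = 0 and
   rs = -n^2, then with t = as/a0 the rational X = 2t + 2 is the abscissa of a
   point of Y^2 = X(X - 1)(X - 4), namely Y = 2n(1 + t)/a0^2; X avoids 0, 1, 4
   because r and s are non-zero. *)
Lemma rat_point_of_shifts (a0 ar as_ r s n : rat) : a0 != 0 -> r != 0 -> s != 0 ->
  r = a0 ^+ 2 - ar ^+ 2 -> s = a0 ^+ 2 - as_ ^+ 2 ->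
  a0 * ar + a0 * as_ + ar * as_ = 0 -> r * s = - n ^+ 2 ->
  exists X Y : rat, Y ^+ 2 = X * (X - 1) * (X - 4) /\ [/\ X != 0, X != 1 & X != 4].
Proof.
move=> a0_neq0 r0 s0 rE sE pair rs.
set t := as_ / a0; set w := ar / a0.
have hw : w * (1 + t) = - t.
  apply/eqP; rewrite -subr_eq0; apply/eqP.
  transitivity ((a0 * ar + a0 * as_ + ar * as_) / a0 ^+ 2); first by rewrite /t /w; field.
  by rewrite pair mul0r.
have hr : r = a0 ^+ 2 * (1 - w ^+ 2) by rewrite rE /w; field.
have hs : s = a0 ^+ 2 * (1 - t ^+ 2) by rewrite sE /t; field.
exists (2 * t + 2), (2 * n * (1 + t) / a0 ^+ 2); split.
  have hn2 : n ^+ 2 = - (r * s) by rewrite rs opprK.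
  transitivity (4 * n ^+ 2 * (1 + t) ^+ 2 / a0 ^+ 4); first by field.
  rewrite hn2 hr hs.
  transitivity (- 4 * ((1 + t) ^+ 2 - (w * (1 + t)) ^+ 2) * (1 - t ^+ 2)); first by field.
  by rewrite hw; ring.
split.
- apply/eqP => X0.
  have t1 : t = -1.
    apply/eqP; rewrite -subr_eq0; apply/eqP.
    by transitivity ((2 * t + 2) / 2); [field | rewrite X0 mul0r].
  by move: hw; rewrite t1 addrN mulr0 opprK => /eqP; rewrite eq_sym oner_eq0.
- apply/eqP => X1.
  have t1 : t = - (1 / 2).
    apply/eqP; rewrite -subr_eq0; apply/eqP.
    by transitivity ((2 * t + 2 - 1) / 2); [field | rewrite X1 subrr mul0r].
  have w1 : w = 1.
    apply/eqP; rewrite -subr_eq0; apply/eqP.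
    transitivity (2 * (w * (1 + t) + t)); first by rewrite t1; field.
    by rewrite hw addNr mulr0.
  by move: r0; rewrite hr w1 expr1n subrr mulr0 eqxx.
- apply/eqP => X4.
  have t1 : t = 1.
    apply/eqP; rewrite -subr_eq0; apply/eqP.
    by transitivity ((2 * t + 2 - 4) / 2); [field | rewrite X4 subrr mul0r].
  by move: s0; rewrite hs t1 expr1n subrr mulr0 eqxx.
Qed.

Lemma ec_add_self_eq (a b : rat) (P : ecpoint) : P = ec_add a b P P -> P = EInf.
Proof.
case: P => // x y; rewrite /ec_add eqxx; case: ifP => // hy.
by case=> hx hyy; move: hy; rewrite -hx subrr mulr0 add0r in hyy; rewrite -hyy eqxx.
Qed.

Lemma ec_double_inf (a b x y : rat) : ec_add a b (EAff x y) (EAff x y) = EInf -> y = 0.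
Proof. by rewrite /ec_add eqxx; case: ifP => // /eqP hy _; lra. Qed.

Lemma cubic_nonzero_roots (a b x1 x2 x3 : rat) : b != 0 ->
  x1 ^+ 3 + a * x1 ^+ 2 + b * x1 = 0 -> x2 ^+ 3 + a * x2 ^+ 2 + b * x2 = 0 ->
  x3 ^+ 3 + a * x3 ^+ 2 + b * x3 = 0 -> x1 != x2 -> x1 != x3 -> x2 != x3 ->
  exists r s, [/\ r != 0, s != 0, a = - (r + s) & b = r * s].
Proof.
move=> b0 h1 h2 h3 d12 d13 d23.
suff two_roots r s : r != 0 -> s != 0 -> r != s ->
    r ^+ 3 + a * r ^+ 2 + b * r = 0 -> s ^+ 3 + a * s ^+ 2 + b * s = 0 ->
    exists r s, [/\ r != 0, s != 0, a = - (r + s) & b = r * s].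
  have [z1|n1] := eqVneq x1 0.
    by apply: (two_roots x2 x3) => //; rewrite -z1 eq_sym.
  have [z2|n2] := eqVneq x2 0; last exact: (two_roots x1 x2).
  by apply: (two_roots x1 x3) => //; rewrite -z2 eq_sym.
move=> r0 s0 rs hr hs.
have qr : r ^+ 2 + a * r + b = 0 by apply: (mulIf r0); rewrite mul0r -hr; ring.
have qs : s ^+ 2 + a * s + b = 0 by apply: (mulIf s0); rewrite mul0r -hs; ring.
have aE : a = - (r + s).
  have /eqP : (r - s) * (r + s + a) = 0 by rewrite -[RHS](subrr 0) -{1}qr -qs; ring.
  rewrite mulf_eq0 subr_eq0 (negbTE rs) /= => /eqP h.
  by apply/eqP; rewrite -subr_eq0 opprK addrC; apply/eqP.
exists r, s; split => //.
by apply/eqP; rewrite -subr_eq0; apply/eqP; rewrite -qr aE; ring.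
Qed.

Section Z2xZ6Embedding.
Variables (a b : rat) (f : 'Z_2 * 'Z_6 -> ecpoint).
Hypotheses (f_inj : injective f) (f_curve : forall u, on_curve a b (f u))
  (f_add : forall u v, f (u.1 + v.1, u.2 + v.2) = ec_add a b (f u) (f v)).

Lemma embedding_zero : f (0, 0) = EInf.
Proof. by apply: (@ec_add_self_eq a b); rewrite -f_add /= !addr0. Qed.

Lemma embedding_neq_inf (u : 'Z_2 * 'Z_6) : u != (0, 0) -> f u <> EInf.
Proof. by move=> u0; rewrite -embedding_zero => /f_inj u0E; rewrite u0E eqxx in u0. Qed.

Lemma embedding_order_two (u : 'Z_2 * 'Z_6) :
  u != (0, 0) -> (u.1 + u.1, u.2 + u.2) == (0, 0) ->
  exists x, f u = EAff x 0 /\ x ^+ 3 + a * x ^+ 2 + b * x = 0.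
Proof.
move=> u0 /eqP uu; have := f_add u u; rewrite uu embedding_zero.
have := f_curve u; case: (f u) (embedding_neq_inf u0) => // x y _ on_c.
by move/esym/ec_double_inf=> y0; exists x; move: on_c; rewrite /= y0 expr0n /= => <-.
Qed.

Lemma embedding_cubic_split : b != 0 ->
  exists r s, [/\ r != 0, s != 0, a = - (r + s) & b = r * s].
Proof.
move=> b0.
have [x1 [f1 h1]] := @embedding_order_two (1, 0) isT isT.
have [x2 [f2 h2]] := @embedding_order_two (0, 3%:R) isT isT.
have [x3 [f3 h3]] := @embedding_order_two (1, 3%:R) isT isT.
have dx u v x y : f u = EAff x 0 -> f v = EAff y 0 -> u != v -> x != y.
  by move=> fu fv; apply: contra => /eqP xy; apply/eqP/f_inj; rewrite fu fv xy.
exact: cubic_nonzero_roots b0 h1 h2 h3 (dx _ _ _ _ f1 f2 isT)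
  (dx _ _ _ _ f1 f3 isT) (dx _ _ _ _ f2 f3 isT).
Qed.

(* Q = f (0, 2) = (x0, y0) has order 3, so 2Q = f (0, 4) = -Q.  Unfolding the
   doubling formula gives the tangent slope l and x(2Q) = l^2 - a - 2 x0 = x0. *)
Lemma embedding_order_three (r s : rat) : a = - (r + s) -> b = r * s ->
  exists x0 y0 l : rat, [/\ y0 != 0, y0 ^+ 2 = x0 * (x0 - r) * (x0 - s),
    2 * y0 * l = 3 * x0 ^+ 2 - 2 * (r + s) * x0 + r * s &
    l ^+ 2 = 3 * x0 - (r + s)].
Proof.
move=> aE bE.
have fQQ := f_add (0, 2%:R) (0, 2%:R); have fQ4 := f_add (0, 2%:R) (0, 4%:R).
have e04 : ((0 : 'Z_2) + 0, (2%:R : 'Z_6) + 2%:R) = (0, 4%:R) by apply/eqP.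
have e06 : ((0 : 'Z_2) + 0, (2%:R : 'Z_6) + 4%:R) = (0, 0) by apply/eqP.
rewrite e04 in fQQ; rewrite e06 embedding_zero in fQ4.
have := @embedding_neq_inf (0, 4%:R) isT; have := f_curve (0, 2%:R).
case: (f (0, 2%:R)) (@embedding_neq_inf (0, 2%:R) isT) fQQ fQ4 => // x0 y0 _.
move=> fQQ fQ4 onQ Q4_neq_inf.
move: fQQ; rewrite /ec_add eqxx; case: ifP => [_ h|hy]; first by rewrite -h in Q4_neq_inf.
set l := (_ / _); set x2 := (_ - _ - _ - _) => fQQ.
move: fQ4; rewrite fQQ /ec_add; case: ifP => [/eqP hx _|]; last by [].
have y0_neq0 : y0 != 0 by apply: contraFneq hy => ->; rewrite oppr0 eqxx.
exists x0, y0, l; split => //.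
- by rewrite onQ aE bE; ring.
- by rewrite /l mulrC divfK ?mulf_neq0 // aE bE; ring.
- by move: hx; rewrite /x2 aE => hx; rewrite -[RHS]opprK; lra.
Qed.

End Z2xZ6Embedding.

Theorem proposition7p9 (alpha n : rat) (hn : n != 0) :
  ~ torsion_iso_Z2xZ6 alpha (- n ^+ 2).
Proof.
case=> f [f_inj f_tor _ f_add].
have f_curve u : on_curve alpha (- n ^+ 2) (f u) by case: (f_tor u).
have b_neq0 : - n ^+ 2 != 0 by rewrite oppr_eq0 expf_neq0.
have [r [s [r0 s0 aE bE]]] := embedding_cubic_split f_inj f_curve f_add b_neq0.
have [x0 [y0 [l [y0_neq0 on_E slope flex]]]] :=
  embedding_order_three f_inj f_curve f_add aE bE.
have [a0 [ar [as_ [a0_neq0 rE sE pair]]]] :=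
  order_three_point_shifts y0_neq0 on_E slope flex.
have [X [Y [hY [X0 X1 X4]]]] := rat_point_of_shifts a0_neq0 r0 s0 rE sE pair (esym bE).
by move: (rat_points_0_1_4 hY); rewrite (negbTE X0) (negbTE X1) (negbTE X4).
Qed.
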